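(* Consider NEAR-DGD$^+$ with $t(k)=k$, i.e. $\mathbf{x}_k=\mathbf{Z}^{k}\mathbf{y}_k$, $\mathbf{y}_{k+1}=\mathbf{x}_k-\alpha\nabla\mathbf{f}(\mathbf{x}_k)$, started from a common point $y_{i,0}=s_0$. Suppose each $f_i$ is $\mu_i$-strongly convex with $L_i$-Lipschitz gradient, $x^\star$ is the minimizer of $h=\sum_if_i$, $0<\alpha\le\min\{1/L,c_4\}$ and $\alpha c_2<1$. Let $\delta=\frac{c_2}{2(1-\alpha c_2)}$ and $c_3=\sqrt{\alpha(\alpha+\delta^{-1})}\,DL$. Then for all $k=0,1,2,\ldots$, $$\|\bar x_k-x^\star\|\le C\rho^k,\qquad C=\max\Big\{\|\bar x_0-x^\star\|,\ \frac{2c_3}{\sqrt{\alpha c_2}}\Big\},\quad \rho=\max\Big\{\beta,\ \sqrt{1-\tfrac{\alpha c_2}{4}}\Big\}.$$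
   Context: $\mathbf{Z}=\mathbf{W}\otimes I_p$ with $\mathbf{W}$ a symmetric doubly-stochastic $n\times n$ matrix of a connected network ($w_{ii}>0$, $w_{ij}>0$ iff neighbours), simple eigenvalue $1$, other eigenvalues in $(-1,1)$; $\beta\in(0,1)$ its second largest eigenvalue magnitude. $\nabla\mathbf{f}(\mathbf{x})=(\nabla f_1(x_1);\ldots;\nabla f_n(x_n))$, $\bar x_k=\frac1n\sum_ix_{i,k}$. Constants: $L=\max_iL_i$, $\mu_{\bar f}=\frac1n\sum_i\mu_i$, $L_{\bar f}=\frac1n\sum_iL_i$, $c_2=\frac{2\mu_{\bar f}L_{\bar f}}{\mu_{\bar f}+L_{\bar f}}$, $c_4=\frac{2}{\mu_{\bar f}+L_{\bar f}}$, $D=\|\mathbf{y}_0-\mathbf{u}^\star\|+\frac{\nu+4}{\nu}\|\mathbf{u}^\star\|$, $\mathbf{u}^\star=(\arg\min f_1;\ldots;\arg\min f_n)$, $\nu=2\alpha\min_i\frac{\mu_iL_i}{\mu_i+L_i}$. *)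

From Stdlib Require Import Reals Lra Relations.
Open Scope R_scope.

(* Vectors of R^p are represented as functions nat -> R; only the
   coordinates 0..p-1 are ever inspected (norms, inner products).
   Stacked vectors (x_1; ...; x_n) are functions nat -> (nat -> R). *)
Definition vec := nat -> R.
Definition svec := nat -> vec.

Fixpoint rsum (m : nat) (f : nat -> R) : R :=
  match m with O => 0 | S m' => rsum m' f + f m' end.

Fixpoint max_upto (m : nat) (f : nat -> R) : R :=
  match m with O => 0 | S O => f O | S m' => Rmax (max_upto m' f) (f m') end.
Fixpoint min_upto (m : nat) (f : nat -> R) : R :=
  match m with O => 0 | S O => f O | S m' => Rmin (min_upto m' f) (f m') end.

Definition dot (p : nat) (u v : vec) : R := rsum p (fun l => u l * v l).
Definition vnorm (p : nat) (v : vec) : R := sqrt (dot p v v).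
Definition vadd (u v : vec) : vec := fun l => u l + v l.
Definition vsub (u v : vec) : vec := fun l => u l - v l.
Definition vscal (a : R) (u : vec) : vec := fun l => a * u l.

Definition snorm (n p : nat) (y : svec) : R :=
  sqrt (rsum n (fun i => dot p (y i) (y i))).

Definition is_gradient (p : nat) (f : vec -> R) (g : vec -> vec) : Prop :=
  forall x : vec, forall eps : R, 0 < eps -> exists del : R, 0 < del /\
    forall h : vec, vnorm p h < del ->
      Rabs (f (vadd x h) - f x - dot p (g x) h) <= eps * vnorm p h.

Definition strongly_convex (p : nat) (mu : R) (f : vec -> R) (g : vec -> vec) : Prop :=
  forall x y : vec,
    f y >= f x + dot p (g x) (vsub y x) + mu / 2 * (vnorm p (vsub y x)) ^ 2.

Definition lipschitz_grad (p : nat) (L : R) (g : vec -> vec) : Prop :=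
  forall x y : vec, vnorm p (vsub (g x) (g y)) <= L * vnorm p (vsub x y).

Definition is_minimizer (f : vec -> R) (x : vec) : Prop := forall y, f x <= f y.

Definition symmetric_mx (n : nat) (W : nat -> nat -> R) : Prop :=
  forall i j, (i < n)%nat -> (j < n)%nat -> W i j = W j i.

Definition doubly_stochastic (n : nat) (W : nat -> nat -> R) : Prop :=
  (forall i j, (i < n)%nat -> (j < n)%nat -> 0 <= W i j) /\
  (forall i, (i < n)%nat -> rsum n (fun j => W i j) = 1) /\
  (forall j, (j < n)%nat -> rsum n (fun i => W i j) = 1).

Definition neighbours (n : nat) (W : nat -> nat -> R) (i j : nat) : Prop :=
  (i < n)%nat /\ (j < n)%nat /\ i <> j /\ 0 < W i j.

Definition connected_net (n : nat) (W : nat -> nat -> R) : Prop :=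
  forall i j, (i < n)%nat -> (j < n)%nat -> clos_refl_trans nat (neighbours n W) i j.

Definition mxv (n : nat) (W : nat -> nat -> R) (v : nat -> R) : nat -> R :=
  fun i => rsum n (fun j => W i j * v j).

Definition is_eigenvalue (n : nat) (W : nat -> nat -> R) (lam : R) : Prop :=
  exists v : nat -> R, (exists i, (i < n)%nat /\ v i <> 0) /\
    forall i, (i < n)%nat -> mxv n W v i = lam * v i.

(* 1 is a simple eigenvalue (W symmetric, so geometric = algebraic mult.):
   its eigenspace is spanned by the all-ones vector *)
Definition simple_eig_one (n : nat) (W : nat -> nat -> R) : Prop :=
  is_eigenvalue n W 1 /\
  forall v : nat -> R, (forall i, (i < n)%nat -> mxv n W v i = v i) ->
    forall i j, (i < n)%nat -> (j < n)%nat -> v i = v j.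

Definition other_eigs_in_open_unit (n : nat) (W : nat -> nat -> R) : Prop :=
  forall lam, is_eigenvalue n W lam -> lam <> 1 -> -1 < lam < 1.

Definition is_slem (n : nat) (W : nat -> nat -> R) (beta : R) : Prop :=
  (exists lam, is_eigenvalue n W lam /\ lam <> 1 /\ Rabs lam = beta) /\
  (forall lam, is_eigenvalue n W lam -> lam <> 1 -> Rabs lam <= beta).

(* Z y = (W (x) I_p) y *)
Definition Zmul (n : nat) (W : nat -> nat -> R) (y : svec) : svec :=
  fun i l => rsum n (fun j => W i j * y j l).

Fixpoint Zpow (n : nat) (W : nat -> nat -> R) (k : nat) (y : svec) : svec :=
  match k with O => y | S k' => Zmul n W (Zpow n W k' y) end.

Fixpoint near_dgd_y (n : nat) (W : nat -> nat -> R) (g : nat -> vec -> vec)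
    (alpha : R) (s0 : vec) (k : nat) : svec :=
  match k with
  | O => fun _ => s0
  | S k' =>
      let xk := Zpow n W k' (near_dgd_y n W g alpha s0 k') in
      fun i => vsub (xk i) (vscal alpha (g i (xk i)))
  end.

Definition near_dgd_x (n : nat) (W : nat -> nat -> R) (g : nat -> vec -> vec)
    (alpha : R) (s0 : vec) (k : nat) : svec :=
  Zpow n W k (near_dgd_y n W g alpha s0 k).

Definition avg (n : nat) (x : svec) : vec :=
  fun l => / INR n * rsum n (fun i => x i l).

From Stdlib Require Import Reals Lra Lia Psatz FunctionalExtensionality Classical.
From mathcomp Require all_boot all_order all_algebra all_classical all_reals.
From mathcomp Require topology normedtype derive Rstruct Rstruct_topology.
Open Scope R_scope.

(* Let E_k = |xbar_k - x*|. As Z is doubly stochastic, xbar_(k+1) is the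
   average of the x_(i,k) - alpha g_i(x_(i,k)), that is, a gradient step on
   fbar = (1/n) sum_i f_i taken from xbar_k, perturbed by the disagreement of
   the x_(i,k). By co-coercivity the gradient step contracts by
   sqrt (1 - alpha c2). The perturbation is at most alpha L |x_k - 1 xbar_k|
   <= alpha L beta^k |y_k|, because W contracts vectors orthogonal to the
   all-ones vector by beta (an extremal Rayleigh quotient of W - J/n is an
   eigenvalue of W other than 1), and |y_k| <= D because each local gradient
   step contracts towards arg min f_i. Squaring with Young's inequality gives
   E_(k+1)^2 <= (1 - alpha c2 / 2) E_k^2 + c3^2 beta^(2k), and induction
   yields E_k <= C rho^k. *)

Lemma rsum_ext m (f g : nat -> R) :
  (forall i, (i < m)%nat -> f i = g i) -> rsum m f = rsum m g.
Proof.
  induction m as [|m IH]; intros H; simpl; [reflexivity|].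
  rewrite IH, (H m); [reflexivity | lia | intros; apply H; lia].
Qed.

Lemma rsum_plus m f g : rsum m (fun i => f i + g i) = rsum m f + rsum m g.
Proof. induction m; simpl; [lra|]. rewrite IHm. lra. Qed.

Lemma rsum_minus m f g : rsum m (fun i => f i - g i) = rsum m f - rsum m g.
Proof. induction m; simpl; [lra|]. rewrite IHm. lra. Qed.

Lemma rsum_scal m c f : rsum m (fun i => c * f i) = c * rsum m f.
Proof. induction m; simpl; [lra|]. rewrite IHm. lra. Qed.

Lemma rsum_opp m f : rsum m (fun i => - f i) = - rsum m f.
Proof. induction m; simpl; [lra|]. rewrite IHm. lra. Qed.

Lemma rsum_const m c : rsum m (fun _ => c) = INR m * c.
Proof. induction m; simpl rsum; [simpl; lra|]. rewrite IHm, S_INR. lra. Qed.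

Lemma rsum_nonneg m f : (forall i, (i < m)%nat -> 0 <= f i) -> 0 <= rsum m f.
Proof.
  induction m; intros H; simpl; [lra|].
  assert (0 <= rsum m f) by (apply IHm; intros; apply H; lia).
  assert (0 <= f m) by (apply H; lia). lra.
Qed.

Lemma rsum_le m f g : (forall i, (i < m)%nat -> f i <= g i) -> rsum m f <= rsum m g.
Proof.
  induction m; intros H; simpl; [lra|].
  assert (rsum m f <= rsum m g) by (apply IHm; intros; apply H; lia).
  assert (f m <= g m) by (apply H; lia). lra.
Qed.

Lemma rsum_ge_term m f j : (forall i, (i < m)%nat -> 0 <= f i) -> (j < m)%nat ->
  f j <= rsum m f.
Proof.
  induction m; intros H Hj; [lia|]. simpl.
  assert (0 <= rsum m f) by (apply rsum_nonneg; intros; apply H; lia).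
  destruct (Nat.eq_dec j m) as [->|Hne]; [lra|].
  assert (f j <= rsum m f) by (apply IHm; [intros; apply H; lia| lia]).
  assert (0 <= f m) by (apply H; lia). lra.
Qed.

Lemma rsum_swap n p (F : nat -> nat -> R) :
  rsum n (fun i => rsum p (fun l => F i l)) = rsum p (fun l => rsum n (fun i => F i l)).
Proof.
  induction n; simpl.
  - rewrite rsum_const. ring.
  - rewrite IHn, <- rsum_plus. reflexivity.
Qed.

Lemma rsum_sqr_eq0 m f : rsum m (fun i => f i * f i) = 0 -> forall i, (i < m)%nat -> f i = 0.
Proof.
  intros H i Hi.
  assert (f i * f i <= rsum m (fun i => f i * f i)).
  { apply (rsum_ge_term m (fun i => f i * f i)); [intros; nra|exact Hi]. }
  nra.
Qed.

Ltac fold_rsum :=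
  repeat (rewrite <- rsum_scal || rewrite <- rsum_plus || rewrite <- rsum_minus
          || rewrite <- rsum_opp).

Lemma cauchy_schwarz_sqr m a b :
  rsum m (fun i => a i * b i) * rsum m (fun i => a i * b i)
  <= rsum m (fun i => a i * a i) * rsum m (fun i => b i * b i).
Proof.
  induction m; simpl; [lra|].
  set (C := rsum m (fun i => a i * b i)) in *.
  set (A := rsum m (fun i => a i * a i)) in *.
  set (B := rsum m (fun i => b i * b i)) in *.
  assert (HA : 0 <= A) by (apply rsum_nonneg; intros; nra).
  assert (HB : 0 <= B) by (apply rsum_nonneg; intros; nra).
  set (x := a m). set (y := b m). clearbody C A B x y.
  assert (Hcross : 2 * C * x * y <= A * y * y + B * x * x).
  { destruct (Req_dec A 0) as [HA0|HA0].
    - assert (HC : C = 0) by nra. rewrite HC, HA0. nra.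
    - assert (A * (A * y * y + B * x * x - 2 * C * x * y)
              = (A * y - C * x) * (A * y - C * x) + (A * B - C * C) * x * x) by ring.
      assert (0 <= (A * B - C * C) * (x * x)) by (apply Rmult_le_pos; nra).
      assert (0 <= (A * y - C * x) * (A * y - C * x)) by apply Rle_0_sqr.
      nra. }
  nra.
Qed.

Lemma cauchy_schwarz m a b :
  rsum m (fun i => a i * b i)
  <= sqrt (rsum m (fun i => a i * a i)) * sqrt (rsum m (fun i => b i * b i)).
Proof.
  rewrite <- sqrt_mult by (apply rsum_nonneg; intros; nra).
  set (C := rsum m (fun i => a i * b i)).
  destruct (Rle_dec C 0); [apply Rle_trans with 0; [lra| apply sqrt_pos]|].
  rewrite <- (sqrt_square C) at 1 by lra.
  apply sqrt_le_1_alt, cauchy_schwarz_sqr.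
Qed.

Lemma dot_ext p u u' v v' : (forall l, (l < p)%nat -> u l = u' l) ->
  (forall l, (l < p)%nat -> v l = v' l) -> dot p u v = dot p u' v'.
Proof. intros Hu Hv. apply rsum_ext. intros. rewrite Hu, Hv by lia. reflexivity. Qed.

Lemma dot_self_nonneg p u : 0 <= dot p u u.
Proof. apply rsum_nonneg. intros. nra. Qed.

Lemma vnorm_nonneg p u : 0 <= vnorm p u.
Proof. apply sqrt_pos. Qed.

Lemma vnorm_sqr p u : vnorm p u * vnorm p u = dot p u u.
Proof. apply sqrt_sqrt, dot_self_nonneg. Qed.

Lemma vnorm_pow2 p u : vnorm p u ^ 2 = dot p u u.
Proof. rewrite <- vnorm_sqr. ring. Qed.

Lemma vnorm_ext p u v : (forall l, (l < p)%nat -> u l = v l) -> vnorm p u = vnorm p v.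
Proof. intros. unfold vnorm. f_equal. apply dot_ext; auto. Qed.

Lemma vnorm_sub_comm p u v : vnorm p (vsub u v) = vnorm p (vsub v u).
Proof. unfold vnorm. f_equal. apply rsum_ext. intros. unfold vsub. ring. Qed.

Lemma dot_le_vnorm p u v : dot p u v <= vnorm p u * vnorm p v.
Proof. apply cauchy_schwarz. Qed.

Lemma vnorm_scal p a u : vnorm p (vscal a u) = Rabs a * vnorm p u.
Proof.
  unfold vnorm. rewrite <- (sqrt_square (Rabs a)) by apply Rabs_pos.
  rewrite <- sqrt_mult by (try apply dot_self_nonneg; nra).
  f_equal. unfold dot, vscal. rewrite <- rsum_scal. apply rsum_ext. intros.
  rewrite <- Rabs_mult, Rabs_right by nra. ring.
Qed.

Lemma vnorm_triangle p u v : vnorm p (vadd u v) <= vnorm p u + vnorm p v.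
Proof.
  assert (H1 := vnorm_nonneg p u). assert (H2 := vnorm_nonneg p v).
  apply Rsqr_incr_0_var; [|lra]. unfold Rsqr.
  assert (E : dot p (vadd u v) (vadd u v) = dot p u u + 2 * dot p u v + dot p v v).
  { unfold dot, vadd. fold_rsum. apply rsum_ext. intros. ring. }
  rewrite vnorm_sqr, E, <- (vnorm_sqr p u), <- (vnorm_sqr p v).
  assert (dot p u v <= vnorm p u * vnorm p v) by apply dot_le_vnorm. nra.
Qed.

Lemma vnorm_rsum p m (F : nat -> vec) :
  vnorm p (fun l => rsum m (fun i => F i l)) <= rsum m (fun i => vnorm p (F i)).
Proof.
  induction m; simpl.
  - unfold vnorm, dot. simpl. rewrite (rsum_ext p _ (fun _ => 0)) by (intros; ring).
    rewrite rsum_const, Rmult_0_r, sqrt_0. lra.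
  - eapply Rle_trans; [apply (vnorm_triangle p (fun l => rsum m (fun i => F i l)) (F m))|].
    lra.
Qed.

Lemma nonpos_of_le_div_nat (K c : R) : (forall N, (0 < N)%nat -> K <= c / INR N) -> K <= 0.
Proof.
  intros H. apply Rnot_lt_le. intros HK.
  assert (Hc : K <= c) by (assert (H1 := H 1%nat ltac:(lia)); simpl in H1; lra).
  destruct (archimed_cor1 (K / (c + 1))) as [N [HN HN0]].
  { apply Rdiv_lt_0_compat; lra. }
  assert (H1 := H N HN0). unfold Rdiv in H1.
  assert (c * / INR N <= c * (K / (c + 1))) by (apply Rmult_le_compat_l; lra).
  assert (c * (K / (c + 1)) = K - K / (c + 1)) by (field; lra).
  assert (0 < K / (c + 1)) by (apply Rdiv_lt_0_compat; lra).
  lra.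
Qed.

Section SmoothStronglyConvex.

Variables (p : nat) (F : vec -> R) (G : vec -> vec) (mu L : R).
Hypothesis Hsc : strongly_convex p mu F G.
Hypothesis Hlip : lipschitz_grad p L G.

Lemma strong_convexity_le_lipschitz : (0 < p)%nat -> mu <= L.
Proof.
  intros Hp.
  set (x := fun _ : nat => 0). set (y := fun _ : nat => 1).
  assert (H1 := Hsc x y). assert (H2 := Hsc y x).
  rewrite vnorm_pow2 in H1, H2. rewrite <- vnorm_sqr, vnorm_sub_comm, vnorm_sqr in H2.
  set (R0 := dot p (vsub y x) (vsub y x)) in *.
  assert (HR : R0 = INR p).
  { unfold R0, dot, vsub, x, y. rewrite (rsum_ext p _ (fun _ => 1)) by (intros; ring).
    rewrite rsum_const. ring. }
  assert (HRp : 0 < R0) by (rewrite HR; apply lt_0_INR; lia).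
  assert (E2 : dot p (G x) (vsub y x) + dot p (G y) (vsub x y)
             = - dot p (vsub (G y) (G x)) (vsub y x)).
  { unfold dot, vsub. fold_rsum. apply rsum_ext. intros. ring. }
  assert (H3 : dot p (vsub (G y) (G x)) (vsub y x) <= L * R0).
  { eapply Rle_trans; [apply dot_le_vnorm|]. unfold R0. rewrite <- vnorm_sqr, <- Rmult_assoc.
    apply Rmult_le_compat_r; [apply vnorm_nonneg| apply Hlip]. }
  apply (Rmult_le_reg_r R0); lra.
Qed.

Section Convex.

Hypothesis Hmu : 0 <= mu.

Lemma descent_step x d h j : 0 < h ->
  let z := fun k : nat => fun l => x l + INR k * h * d l in
  F (z (S j)) - F (z j) <= h * dot p (G x) d + h * h * (INR j + 1) * (L * dot p d d).
Proof.
  intros Hh z.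
  assert (Hcvx := Hsc (z (S j)) (z j)).
  assert (E1 : dot p (G (z (S j))) (vsub (z j) (z (S j))) = - h * dot p (G (z (S j))) d).
  { unfold dot, vsub, z. rewrite <- rsum_scal. apply rsum_ext. intros. rewrite S_INR. ring. }
  assert (Hn : 0 <= mu / 2 * vnorm p (vsub (z j) (z (S j))) ^ 2).
  { apply Rmult_le_pos; [lra|]. rewrite vnorm_pow2. apply dot_self_nonneg. }
  assert (E2 : dot p (G (z (S j))) d = dot p (G x) d + dot p (vsub (G (z (S j))) (G x)) d).
  { unfold dot, vsub. fold_rsum. apply rsum_ext. intros. ring. }
  assert (E3 : vnorm p (vsub (z (S j)) x) = (INR j + 1) * h * vnorm p d).
  { rewrite (vnorm_ext p _ (vscal ((INR j + 1) * h) d)).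
    - rewrite vnorm_scal, Rabs_right; [reflexivity|].
      assert (0 <= INR j) by apply pos_INR. nra.
    - intros. unfold vsub, vscal, z. rewrite S_INR. ring. }
  assert (Hgrad : dot p (vsub (G (z (S j))) (G x)) d <= L * (INR j + 1) * h * dot p d d).
  { eapply Rle_trans; [apply dot_le_vnorm|].
    replace (L * (INR j + 1) * h * dot p d d) with (L * vnorm p (vsub (z (S j)) x) * vnorm p d)
      by (rewrite E3, <- vnorm_sqr; ring).
    apply Rmult_le_compat_r; [apply vnorm_nonneg|]. apply Hlip. }
  assert (h * dot p (G (z (S j))) d <= h * (dot p (G x) d + L * (INR j + 1) * h * dot p d d))
    by (apply Rmult_le_compat_l; lra).
  nra.
Qed.

(* Only first-order inequalities are available, so the descent lemma is
   obtained by telescoping [descent_step] along a subdivision of [x, x + d]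
   into N pieces and letting N grow. *)
Lemma descent x d : F (fun l => x l + d l) <= F x + dot p (G x) d + L / 2 * dot p d d.
Proof.
  set (a := dot p (G x) d). set (b := L * dot p d d).
  enough (F (fun l => x l + d l) - F x - a - b / 2 <= 0) by (unfold b in *; lra).
  apply (nonpos_of_le_div_nat _ (b / 2)). intros N HN.
  assert (HNr : 0 < INR N) by (apply lt_0_INR; lia).
  set (h := / INR N).
  assert (Hh : 0 < h) by (apply Rinv_0_lt_compat; lra).
  set (z := fun k : nat => fun l => x l + INR k * h * d l).
  assert (Hcum : forall j, F (z j) - F x <= INR j * h * a + h * h * b * (INR j * (INR j + 1) / 2)).
  { induction j.
    - assert (z 0%nat = x) as ->.
      { apply functional_extensionality. intros. unfold z. simpl. ring. }
      simpl. lra.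
    - assert (Hs := descent_step x d h j Hh). fold z a b in Hs. rewrite S_INR.
      assert ((INR j + 1) * h * a + h * h * b * ((INR j + 1) * (INR j + 1 + 1) / 2) =
              (INR j * h * a + h * h * b * (INR j * (INR j + 1) / 2)) +
              (h * a + h * h * (INR j + 1) * b)) by field.
      lra. }
  assert (Ez : z N = fun l => x l + d l).
  { apply functional_extensionality. intros. unfold z, h. field. lra. }
  assert (H := Hcum N). rewrite Ez in H.
  assert (INR N * h * a + h * h * b * (INR N * (INR N + 1) / 2) = a + b / 2 + b / 2 / INR N)
    by (unfold h; field; lra).
  lra.
Qed.

Lemma le_mul_of_forall_quadratic (c w q : R) : 0 <= c -> 0 <= w ->
  (forall t, (2 * t - c * t * t) * w <= q) -> w <= c * q.
Proof.
  intros Hc Hw H.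
  destruct (Rle_lt_or_eq_dec 0 c Hc) as [Hc0|<-].
  - assert (H1 := H (/ c)).
    replace ((2 * / c - c * / c * / c) * w) with (w / c) in H1 by (field; lra).
    apply (Rmult_le_compat_l c) in H1; [|lra].
    replace (c * (w / c)) with w in H1 by (field; lra). exact H1.
  - destruct (Rle_lt_or_eq_dec 0 w Hw) as [Hw0|<-]; [|lra].
    assert (H0 := H 0). assert (H1 := H ((q + 1) / (2 * w))).
    replace ((2 * ((q + 1) / (2 * w)) - 0 * ((q + 1) / (2 * w)) * ((q + 1) / (2 * w))) * w)
      with (q + 1) in H1 by (field; lra).
    lra.
Qed.

Lemma grad_eq0_of_minimizer xs : is_minimizer F xs -> forall l, (l < p)%nat -> G xs l = 0.
Proof.
  intros Hmin.
  set (v := G xs). set (t := / (Rabs L + 1)).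
  assert (HL := RRle_abs L). assert (HL0 := Rabs_pos L).
  assert (Ht : 0 < t) by (apply Rinv_0_lt_compat; lra).
  assert (HLt : L * t < 1).
  { apply (Rmult_lt_reg_r (Rabs L + 1)); [lra|].
    replace (L * t * (Rabs L + 1)) with L by (unfold t; field; lra). lra. }
  assert (Hd := descent xs (vscal (- t) v)).
  assert (Hm := Hmin (fun l => xs l + vscal (- t) v l)).
  assert (E1 : dot p v (vscal (- t) v) = - t * dot p v v).
  { unfold dot, vscal. rewrite <- rsum_scal. apply rsum_ext. intros. ring. }
  assert (E2 : dot p (vscal (- t) v) (vscal (- t) v) = t * t * dot p v v).
  { unfold dot, vscal. rewrite <- rsum_scal. apply rsum_ext. intros. ring. }
  fold v in Hd. rewrite E1, E2 in Hd.
  assert (Hvv := dot_self_nonneg p v).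
  assert (Hv0 : t * (1 - L * t / 2) * dot p v v <= 0) by lra.
  assert (0 < t * (1 - L * t / 2)) by (apply Rmult_lt_0_compat; lra).
  apply rsum_sqr_eq0. fold (dot p v v). nra.
Qed.

Hypothesis HmuL : mu <= L.

(* Apply [descent] and strong convexity at y - t w and x + t w, where
   w = (G y - G x) - mu (y - x), and optimise in t. *)
Lemma cocoercive x y :
  dot p (vsub (G y) (G x)) (vsub (G y) (G x)) + mu * L * dot p (vsub y x) (vsub y x)
  <= (mu + L) * dot p (vsub (G y) (G x)) (vsub y x).
Proof.
  set (w := fun l => (G y l - G x l) - mu * (y l - x l)).
  assert (Hquad : forall t, (2 * t - (L - mu) * t * t) * dot p w w <= dot p w (vsub y x)).
  { intros t.
    set (z := fun l => y l - t * w l). set (z' := fun l => x l + t * w l).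
    assert (SC1 := Hsc x z). assert (SC2 := Hsc y z').
    assert (DL1 := descent y (vsub z y)). assert (DL2 := descent x (vsub z' x)).
    assert (Ez : (fun l => y l + vsub z y l) = z).
    { apply functional_extensionality. intros. unfold vsub. ring. }
    assert (Ez' : (fun l => x l + vsub z' x l) = z').
    { apply functional_extensionality. intros. unfold vsub. ring. }
    rewrite Ez in DL1. rewrite Ez' in DL2. rewrite vnorm_pow2 in SC1, SC2.
    assert ((dot p (G x) (vsub z x) + mu / 2 * dot p (vsub z x) (vsub z x))
          - (dot p (G y) (vsub z y) + L / 2 * dot p (vsub z y) (vsub z y))
          + (dot p (G y) (vsub z' y) + mu / 2 * dot p (vsub z' y) (vsub z' y))
          - (dot p (G x) (vsub z' x) + L / 2 * dot p (vsub z' x) (vsub z' x))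
          = - dot p w (vsub y x) + (2 * t - (L - mu) * t * t) * dot p w w).
    { unfold dot, vsub, z, z'. fold_rsum. apply rsum_ext. intros. unfold w. field. }
    lra. }
  assert (Hmain := le_mul_of_forall_quadratic (L - mu) _ _ ltac:(lra) (dot_self_nonneg p w) Hquad).
  assert (E1 : dot p w w = dot p (vsub (G y) (G x)) (vsub (G y) (G x))
                 - 2 * mu * dot p (vsub (G y) (G x)) (vsub y x)
                 + mu * mu * dot p (vsub y x) (vsub y x)).
  { unfold dot, vsub. fold_rsum. apply rsum_ext. intros. unfold w. ring. }
  assert (E2 : dot p w (vsub y x) = dot p (vsub (G y) (G x)) (vsub y x) - mu * dot p (vsub y x) (vsub y x)).
  { unfold dot, vsub. fold_rsum. apply rsum_ext. intros. unfold w. ring. }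
  rewrite E1, E2 in Hmain. nra.
Qed.

Lemma gradient_step_contraction alpha : 0 < mu + L -> 0 <= alpha -> alpha <= 2 / (mu + L) ->
  forall x y,
  dot p (vsub (vsub x (vscal alpha (G x))) (vsub y (vscal alpha (G y))))
        (vsub (vsub x (vscal alpha (G x))) (vsub y (vscal alpha (G y))))
  <= (1 - 2 * alpha * mu * L / (mu + L)) * dot p (vsub x y) (vsub x y).
Proof.
  intros HmL Ha Ha2 x y.
  assert (H := cocoercive y x).
  set (P := dot p (vsub (G x) (G y)) (vsub (G x) (G y))) in *.
  set (Q := dot p (vsub (G x) (G y)) (vsub x y)) in *.
  set (R0 := dot p (vsub x y) (vsub x y)) in *.
  assert (E : dot p (vsub (vsub x (vscal alpha (G x))) (vsub y (vscal alpha (G y))))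
        (vsub (vsub x (vscal alpha (G x))) (vsub y (vscal alpha (G y))))
        = R0 - 2 * alpha * Q + alpha * alpha * P).
  { unfold R0, Q, P, dot, vsub, vscal. fold_rsum. apply rsum_ext. intros. ring. }
  rewrite E.
  assert (HP : 0 <= P) by apply dot_self_nonneg.
  assert (Hal : alpha * (mu + L) <= 2).
  { apply (Rmult_le_compat_r (mu + L)) in Ha2; [|lra].
    replace (2 / (mu + L) * (mu + L)) with 2 in Ha2 by (field; lra). lra. }
  apply (Rmult_le_reg_l (mu + L)); [lra|].
  replace ((mu + L) * ((1 - 2 * alpha * mu * L / (mu + L)) * R0))
    with ((mu + L) * R0 - 2 * alpha * mu * L * R0) by (field; lra).
  assert (0 <= alpha * P * (2 - alpha * (mu + L))) by (apply Rmult_le_pos; [apply Rmult_le_pos|]; lra).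
  nra.
Qed.

End Convex.

End SmoothStronglyConvex.

Module Rayleigh.
Import all_boot all_order all_algebra all_classical all_reals.
Import topology normedtype derive Rstruct Rstruct_topology.
Import Order.TTheory GRing.Theory Num.Theory.
Import numFieldNormedType.Exports.
Local Open Scope classical_set_scope.
Local Open Scope ring_scope.
Local Open Scope R_scope.

Lemma rsum_continuous k m (F : nat -> 'rV[R]_k -> R) :
  (forall i, continuous (F i)) -> continuous (fun v => rsum m (fun i => F i v)).
Proof.
move=> HF; elim: m => [|m IH] /=; first exact: cst_continuous.
by move=> x; apply: (@continuousD R R^o); [exact: IH | exact: HF].
Qed.

Lemma product_continuous k (f g : 'rV[R]_k -> R) : continuous f -> continuous g ->
  continuous (fun v => f v * g v).
Proof. by move=> Hf Hg x; apply: (@continuousM R); [exact: Hf | exact: Hg]. Qed.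

(* Maximise the continuous map v |-> |B v|^2 over the unit sphere, a closed
   subset of the compact cube [-1, 1]^(m+1). *)
Lemma dot_mxv_max_on_sphere m (B : nat -> nat -> R) :
  exists u, dot m.+1 u u = 1 /\
    forall v, dot m.+1 v v = 1 ->
      dot m.+1 (mxv m.+1 B v) (mxv m.+1 B v) <= dot m.+1 (mxv m.+1 B u) (mxv m.+1 B u).
Proof.
pose n := m.+1.
pose conv (v : 'rV[R]_n) : nat -> R := fun j => v ord0 (inord j).
have Hcoord j : continuous (fun v : 'rV[R]_n => conv v j).
  exact: (@coord_continuous R 1 n ord0 (inord j)).
have Hcn : continuous (fun v => dot n (conv v) (conv v)).
  by apply: rsum_continuous => j; exact: product_continuous.
have Hcq : continuous (fun v => dot n (mxv n B (conv v)) (mxv n B (conv v))).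
  apply: rsum_continuous => i; apply: product_continuous;
  apply: rsum_continuous => j; apply: product_continuous => //; exact: cst_continuous.
pose A := [set v : 'rV[R]_n | dot n (conv v) (conv v) = 1].
have A0 : A !=set0.
  exists (const_mx (/ sqrt (INR n))); rewrite /A /= /dot.
  rewrite (@rsum_ext _ _ (fun _ => / sqrt (INR n) * / sqrt (INR n))); last first.
    by move=> j _; rewrite /conv !mxE.
  rewrite rsum_const -Rinv_mult sqrt_sqrt; last exact: pos_INR.
  by apply: Rinv_r; apply: not_0_INR.
have Acl : closed A := proj1 (continuous_closedP _) Hcn [set 1] (@closed_eq _ 1).
have Abox : compact [set v : 'rV[R]_n | forall i, `[-1%R, 1%R]%classic (v ord0 i)].
  apply: (@rV_compact R n (fun=> `[-1%R, 1%R]%classic)) => _.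
  exact: segment_compact.
have Acp : compact A.
  apply: subclosed_compact Acl Abox _ => v Av i /=.
  have Hi : conv v i * conv v i <= 1.
    rewrite -Av; apply: (@rsum_ge_term n (fun j => conv v j * conv v j)).
      by move=> j _; apply: Rle_0_sqr.
    by move: (ltn_ord i) => /ssrnat.ltP.
  have -> : v ord0 i = conv v i by rewrite /conv inord_val.
  rewrite in_itv /=; apply/andP; split; apply/RleP.
    by change (- 1 <= conv v i); nra.
  by change (conv v i <= 1); nra.
have [c cA cmax] := @EVT_max_rV R n (fun v => dot n (mxv n B (conv v)) (mxv n B (conv v))) A A0 Acp
                       (continuous_subspaceT Hcq).
exists (conv c); split; first by move: cA; rewrite inE.
move=> v Hv.
pose t : 'rV[R]_n := \row_j v (nat_of_ord j).
have Ht j : (j < n)%coq_nat -> conv t j = v j.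
  by move=> /ssrnat.ltP Hj; rewrite /conv mxE inordK.
have -> : dot n (mxv n B v) (mxv n B v) = dot n (mxv n B (conv t)) (mxv n B (conv t)).
  apply: rsum_ext => i _; rewrite /mxv.
  by rewrite (@rsum_ext _ (fun j => B i j * v j) (fun j => B i j * conv t j)) // => j Hj; rewrite Ht.
apply/RleP; apply: cmax; rewrite inE /A /=.
by rewrite -Hv; apply: rsum_ext => j Hj; rewrite Ht.
Qed.

End Rayleigh.

Lemma mxv_ext n B u v i : (forall j, (j < n)%nat -> u j = v j) -> mxv n B u i = mxv n B v i.
Proof. intros H. apply rsum_ext. intros j Hj. rewrite H by exact Hj. reflexivity. Qed.

Lemma mxv_add_scal n B u v a i :
  mxv n B (fun j => u j + a * v j) i = mxv n B u i + a * mxv n B v i.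
Proof. unfold mxv. rewrite <- rsum_scal, <- rsum_plus. apply rsum_ext. intros. ring. Qed.

Lemma mxv_scal n B c v i : mxv n B (fun j => c * v j) i = c * mxv n B v i.
Proof. unfold mxv. rewrite <- rsum_scal. apply rsum_ext. intros. ring. Qed.

Lemma dot_mxv_symmetric n B u v : symmetric_mx n B ->
  dot n u (mxv n B v) = dot n v (mxv n B u).
Proof.
  intros Hsym. unfold dot, mxv.
  rewrite (rsum_ext n _ (fun i => rsum n (fun j => u i * B i j * v j)))
    by (intros; rewrite <- rsum_scal; apply rsum_ext; intros; ring).
  rewrite rsum_swap. apply rsum_ext. intros j Hj.
  rewrite <- rsum_scal. apply rsum_ext. intros i Hi. rewrite (Hsym i j) by assumption. ring.
Qed.

Lemma eq0_of_quadratic_nonpos a b : (forall t, 2 * t * a + t * t * b <= 0) -> a = 0.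
Proof.
  intros H. destruct (Req_dec a 0) as [|Ha]; [assumption|]. exfalso.
  assert (Hb : - Rabs b <= b) by (unfold Rabs; destruct (Rcase_abs b); lra).
  assert (Hb0 := Rabs_pos b).
  set (t := a / (Rabs b + 1)).
  assert (Hta : t * a = a * a / (Rabs b + 1)) by (unfold t; field; lra).
  assert (0 < a * a / (Rabs b + 1)) by (apply Rdiv_lt_0_compat; [nra|lra]).
  assert (E : t * (t * Rabs b) = t * a - t * t) by (unfold t; field; lra).
  assert (t * t * b >= - (t * (t * Rabs b))).
  { assert (0 <= t * t) by nra. nra. }
  assert (Ht := H t). nra.
Qed.

(* A maximiser u0 of |B v|^2 on the unit sphere is an eigenvector of B^2 for
   the maximum s; combining u0 and B u0 then yields an eigenvector of B for
   the eigenvalue sqrt s or -sqrt s. *)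
Section RayleighQuotient.

Variables (n : nat) (B : nat -> nat -> R) (u0 : vec).
Hypothesis Hsym : symmetric_mx n B.
Hypothesis Hu0 : dot n u0 u0 = 1.
Hypothesis Hmax : forall v, dot n v v = 1 ->
  dot n (mxv n B v) (mxv n B v) <= dot n (mxv n B u0) (mxv n B u0).

Let s := dot n (mxv n B u0) (mxv n B u0).

Lemma rayleigh_bound v : dot n (mxv n B v) (mxv n B v) <= s * dot n v v.
Proof.
  destruct (Rle_lt_or_eq_dec 0 (dot n v v) (dot_self_nonneg n v)) as [Hp|Hz].
  - set (c := / sqrt (dot n v v)).
    assert (Hsq : 0 < sqrt (dot n v v)) by (apply sqrt_lt_R0; exact Hp).
    assert (Hcc : c * c * dot n v v = 1).
    { unfold c. rewrite <- Rinv_mult, sqrt_sqrt by lra. field. lra. }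
    assert (E1 : dot n (fun j => c * v j) (fun j => c * v j) = c * c * dot n v v).
    { unfold dot. rewrite <- rsum_scal. apply rsum_ext. intros. ring. }
    assert (E2 : dot n (mxv n B (fun j => c * v j)) (mxv n B (fun j => c * v j))
                 = c * c * dot n (mxv n B v) (mxv n B v)).
    { unfold dot. rewrite <- rsum_scal. apply rsum_ext. intros. rewrite mxv_scal. ring. }
    assert (H := Hmax (fun j => c * v j) ltac:(rewrite E1; exact Hcc)).
    rewrite E2 in H. fold s in H.
    apply (Rmult_le_compat_r (dot n v v)) in H; [|lra].
    replace (c * c * dot n (mxv n B v) (mxv n B v) * dot n v v)
      with (dot n (mxv n B v) (mxv n B v) * (c * c * dot n v v)) in H by ring.
    rewrite Hcc, Rmult_1_r in H. exact H.
  - assert (Hv0 : forall j, (j < n)%nat -> v j = 0) by (apply rsum_sqr_eq0; symmetry; exact Hz).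
    rewrite <- Hz, Rmult_0_r. unfold dot.
    rewrite (rsum_ext n _ (fun _ => 0)); [rewrite rsum_const; lra|].
    intros i _. rewrite (mxv_ext n B v (fun _ => 0)) by exact Hv0.
    unfold mxv. rewrite (rsum_ext n _ (fun _ => 0)) by (intros; ring). rewrite rsum_const. ring.
Qed.

Lemma rayleigh_first_variation v :
  dot n (mxv n B u0) (mxv n B v) = s * dot n u0 v.
Proof.
  enough (dot n (mxv n B u0) (mxv n B v) - s * dot n u0 v = 0) by lra.
  apply (eq0_of_quadratic_nonpos _ (dot n (mxv n B v) (mxv n B v) - s * dot n v v)).
  intros t. assert (H := rayleigh_bound (fun j => u0 j + t * v j)).
  assert (E1 : dot n (mxv n B (fun j => u0 j + t * v j)) (mxv n B (fun j => u0 j + t * v j)) =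
               s + 2 * t * dot n (mxv n B u0) (mxv n B v) + t * t * dot n (mxv n B v) (mxv n B v)).
  { unfold s, dot. fold_rsum. apply rsum_ext. intros. rewrite mxv_add_scal. ring. }
  assert (E2 : dot n (fun j => u0 j + t * v j) (fun j => u0 j + t * v j)
               = 1 + 2 * t * dot n u0 v + t * t * dot n v v).
  { rewrite <- Hu0. unfold dot. fold_rsum. apply rsum_ext. intros. ring. }
  rewrite E1, E2 in H. nra.
Qed.

Lemma rayleigh_maximiser_eigen2 j : (j < n)%nat -> mxv n B (mxv n B u0) j = s * u0 j.
Proof.
  set (r := fun j => mxv n B (mxv n B u0) j - s * u0 j).
  assert (H := rayleigh_first_variation r).
  rewrite dot_mxv_symmetric in H by exact Hsym.
  assert (Hr : dot n r r = 0).
  { unfold dot in *. rewrite (rsum_ext n (fun j => r j * r j)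
        (fun j => r j * mxv n B (mxv n B u0) j - s * (u0 j * r j))) by (intros; unfold r at 2; ring).
    rewrite rsum_minus, rsum_scal. lra. }
  intros Hj. assert (H0 := rsum_sqr_eq0 n r Hr j Hj). unfold r in H0. lra.
Qed.

Lemma rayleigh_eigenvector : exists lam z, lam * lam = s /\
  (exists j, (j < n)%nat /\ z j <> 0) /\ forall j, (j < n)%nat -> mxv n B z j = lam * z j.
Proof.
  assert (Hs0 : 0 <= s) by apply dot_self_nonneg.
  set (sg := sqrt s).
  assert (Hsg : sg * sg = s) by (apply sqrt_sqrt; exact Hs0).
  set (w := fun j => mxv n B u0 j - sg * u0 j).
  destruct (classic (exists j, (j < n)%nat /\ w j <> 0)) as [Hw|Hw].
  - exists (- sg), w. split; [lra|]. split; [exact Hw|].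
    intros j Hj. unfold w at 1.
    rewrite (mxv_ext n B _ (fun j => mxv n B u0 j + - sg * u0 j)) by (intros; ring).
    rewrite mxv_add_scal, rayleigh_maximiser_eigen2 by exact Hj. unfold w. rewrite <- Hsg. ring.
  - exists sg, u0. split; [exact Hsg|]. split.
    + apply NNPP. intros Hne.
      assert (dot n u0 u0 = 0); [|lra].
      unfold dot. rewrite (rsum_ext n _ (fun _ => 0)); [rewrite rsum_const; ring|].
      intros j Hj. destruct (Req_dec (u0 j) 0) as [->|Hj0]; [ring|].
      exfalso. apply Hne. exists j. auto.
    + intros j Hj. destruct (Req_dec (w j) 0) as [Hw0|Hw0]; [unfold w in Hw0; lra|].
      exfalso. apply Hw. exists j. auto.
Qed.

End RayleighQuotient.

Lemma symmetric_mx_norm_eigenvalue n B : (0 < n)%nat -> symmetric_mx n B ->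
  exists lam z, (exists j, (j < n)%nat /\ z j <> 0) /\
    (forall j, (j < n)%nat -> mxv n B z j = lam * z j) /\
    forall v, dot n (mxv n B v) (mxv n B v) <= lam * lam * dot n v v.
Proof.
  intros Hn Hsym. destruct n as [|m]; [lia|].
  destruct (Rayleigh.dot_mxv_max_on_sphere m B) as [u0 [Hu0 Hmax]].
  destruct (rayleigh_eigenvector (S m) B u0 Hsym Hu0 Hmax) as [lam [z [Hlam [Hz Heig]]]].
  exists lam, z. split; [exact Hz|]. split; [exact Heig|].
  intros v. rewrite Hlam. exact (rayleigh_bound _ _ _ Hmax v).
Qed.

Lemma mxv_colsum n W u : doubly_stochastic n W ->
  rsum n (fun i => mxv n W u i) = rsum n u.
Proof.
  intros [_ [_ Hc]]. unfold mxv.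
  rewrite rsum_swap. apply rsum_ext. intros j Hj.
  rewrite (rsum_ext n _ (fun i => u j * W i j)) by (intros; ring).
  rewrite rsum_scal, Hc by exact Hj. ring.
Qed.

(* Each (W u)_i is a convex combination of the u_j, so by Jensen
   (W u)_i^2 <= sum_j W_ij u_j^2; the column sums are 1. *)
Lemma dot_mxv_le n W u : doubly_stochastic n W ->
  dot n (mxv n W u) (mxv n W u) <= dot n u u.
Proof.
  intros HW. destruct HW as [Hpos [Hr Hc]].
  assert (Hi : forall i, (i < n)%nat ->
    mxv n W u i * mxv n W u i <= rsum n (fun j => W i j * (u j * u j))).
  { intros i Hin.
    assert (H := cauchy_schwarz_sqr n (fun j => sqrt (W i j)) (fun j => sqrt (W i j) * u j)).
    assert (E1 : rsum n (fun j => sqrt (W i j) * (sqrt (W i j) * u j)) = mxv n W u i).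
    { apply rsum_ext. intros j Hj. rewrite <- Rmult_assoc, sqrt_sqrt by (apply Hpos; lia). ring. }
    assert (E2 : rsum n (fun j => sqrt (W i j) * sqrt (W i j)) = 1).
    { rewrite <- (Hr i Hin). apply rsum_ext. intros j Hj. apply sqrt_sqrt. apply Hpos; lia. }
    assert (E3 : rsum n (fun j => sqrt (W i j) * u j * (sqrt (W i j) * u j))
                 = rsum n (fun j => W i j * (u j * u j))).
    { apply rsum_ext. intros j Hj.
      replace (sqrt (W i j) * u j * (sqrt (W i j) * u j))
        with ((sqrt (W i j) * sqrt (W i j)) * (u j * u j)) by ring.
      rewrite sqrt_sqrt by (apply Hpos; lia). ring. }
    cbv beta in H. rewrite E1, E2, E3 in H. lra. }
  eapply Rle_trans; [apply rsum_le; exact Hi|].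
  rewrite rsum_swap. right. apply rsum_ext. intros j Hj.
  rewrite (rsum_ext n _ (fun i => (u j * u j) * W i j)) by (intros; ring).
  rewrite rsum_scal, Hc by exact Hj. ring.
Qed.

(* On the complement of the consensus direction, W acts as the symmetric
   matrix B = W - J/n; an extremal eigenvector of B is then an eigenvector of
   W orthogonal to the all-ones vector, whose eigenvalue is not 1. *)
Lemma dot_mxv_le_slem n W beta : (0 < n)%nat -> symmetric_mx n W ->
  doubly_stochastic n W -> simple_eig_one n W -> is_slem n W beta ->
  forall u, rsum n u = 0 -> dot n (mxv n W u) (mxv n W u) <= beta * beta * dot n u u.
Proof.
  intros Hn Hsym HW Hsimple Hslem u Hu.
  assert (HnR : 0 < INR n) by (apply lt_0_INR; lia).
  set (B := fun i j => W i j - / INR n).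
  assert (HB : forall v i, mxv n B v i = mxv n W v i - / INR n * rsum n v).
  { intros v i. unfold mxv, B. rewrite <- rsum_scal, <- rsum_minus. apply rsum_ext. intros. ring. }
  assert (HBsym : symmetric_mx n B).
  { intros i j Hi Hj. unfold B. rewrite Hsym by assumption. reflexivity. }
  destruct (symmetric_mx_norm_eigenvalue n B Hn HBsym) as [lam [z [[j0 [Hj0 Hz0]] [Heig Hbound]]]].
  assert (EWu : dot n (mxv n W u) (mxv n W u) = dot n (mxv n B u) (mxv n B u)).
  { apply dot_ext; intros; rewrite HB, Hu; ring. }
  rewrite EWu. eapply Rle_trans; [apply Hbound|].
  apply Rmult_le_compat_r; [apply dot_self_nonneg|].
  destruct (Req_dec lam 0) as [->|Hl0]; [nra|].
  assert (Hsum : rsum n z = 0).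
  { assert (E : lam * rsum n z = rsum n (fun j => mxv n B z j)).
    { rewrite <- rsum_scal. apply rsum_ext. intros. rewrite Heig by assumption. reflexivity. }
    rewrite (rsum_ext n (fun j => mxv n B z j) (fun j => mxv n W z j - / INR n * rsum n z)) in E
      by (intros; apply HB).
    rewrite rsum_minus, mxv_colsum, rsum_const in E by exact HW.
    replace (rsum n z - INR n * (/ INR n * rsum n z)) with 0 in E by (field; lra).
    apply Rmult_integral in E. destruct E; [contradiction|assumption]. }
  assert (HWz : forall i, (i < n)%nat -> mxv n W z i = lam * z i).
  { intros i Hi. rewrite <- Heig by exact Hi. rewrite HB, Hsum. ring. }
  assert (Hl1 : lam <> 1).
  { intros ->. destruct Hsimple as [_ Hconst].
    assert (Hc : forall i, (i < n)%nat -> z i = z 0%nat).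
    { intros i Hi. apply Hconst; [|exact Hi|exact Hn].
      intros k Hk. rewrite HWz by exact Hk. ring. }
    rewrite (rsum_ext n _ (fun _ => z 0%nat)), rsum_const in Hsum by exact Hc.
    apply Hz0. rewrite Hc by exact Hj0. nra. }
  destruct Hslem as [_ Hslem].
  assert (Habs : Rabs lam <= beta).
  { apply Hslem; [|exact Hl1]. exists z. split; [exists j0; auto| exact HWz]. }
  assert (Hl := Rabs_pos lam).
  assert (lam * lam = Rabs lam * Rabs lam)
    by (rewrite <- Rabs_mult; symmetry; apply Rabs_right; nra).
  nra.
Qed.

Definition ssq n p (y : svec) : R := rsum n (fun i => dot p (y i) (y i)).

Lemma ssq_nonneg n p y : 0 <= ssq n p y.
Proof. apply rsum_nonneg. intros. apply dot_self_nonneg. Qed.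

Lemma snorm_nonneg n p y : 0 <= snorm n p y.
Proof. apply sqrt_pos. Qed.

Lemma ssq_ext n p y z : (forall i l, (i < n)%nat -> (l < p)%nat -> y i l = z i l) ->
  ssq n p y = ssq n p z.
Proof. intros H. apply rsum_ext. intros i Hi. apply dot_ext; intros; apply H; auto. Qed.

Lemma ssq_by_columns n p y :
  ssq n p y = rsum p (fun l => dot n (fun i => y i l) (fun i => y i l)).
Proof. apply rsum_swap. Qed.

Lemma vnorm_le_snorm n p y i : (i < n)%nat -> vnorm p (y i) <= snorm n p y.
Proof.
  intros Hi. apply sqrt_le_1_alt.
  apply (rsum_ge_term n (fun i => dot p (y i) (y i))); [intros; apply dot_self_nonneg| exact Hi].
Qed.

Lemma snorm_triangle n p a b :
  snorm n p (fun i => vadd (a i) (b i)) <= snorm n p a + snorm n p b.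
Proof.
  assert (Ha := ssq_nonneg n p a). assert (Hb := ssq_nonneg n p b).
  unfold snorm. fold (ssq n p a) (ssq n p b) (ssq n p (fun i => vadd (a i) (b i))).
  assert (H1 := sqrt_pos (ssq n p a)). assert (H2 := sqrt_pos (ssq n p b)).
  apply Rsqr_incr_0_var; [|lra]. unfold Rsqr.
  rewrite sqrt_sqrt by apply ssq_nonneg.
  assert (Hle : ssq n p (fun i => vadd (a i) (b i)) <=
      rsum n (fun i => (vnorm p (a i) + vnorm p (b i)) * (vnorm p (a i) + vnorm p (b i)))).
  { apply rsum_le. intros i Hi. rewrite <- vnorm_sqr.
    assert (T := vnorm_triangle p (a i) (b i)). assert (T0 := vnorm_nonneg p (vadd (a i) (b i))).
    apply Rmult_le_compat; lra. }
  assert (Hsq : forall c, rsum n (fun i => vnorm p (c i) * vnorm p (c i)) = ssq n p c)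
    by (intros c; apply rsum_ext; intros; apply vnorm_sqr).
  assert (E : rsum n (fun i => (vnorm p (a i) + vnorm p (b i)) * (vnorm p (a i) + vnorm p (b i)))
     = ssq n p a + 2 * rsum n (fun i => vnorm p (a i) * vnorm p (b i)) + ssq n p b).
  { rewrite <- !Hsq. fold_rsum. apply rsum_ext. intros. ring. }
  assert (Hcs := cauchy_schwarz n (fun i => vnorm p (a i)) (fun i => vnorm p (b i))).
  cbv beta in Hcs. rewrite !Hsq in Hcs.
  assert (S1 := sqrt_sqrt _ Ha). assert (S2 := sqrt_sqrt _ Hb).
  nra.
Qed.

Lemma snorm_sub_le n p a b : snorm n p (fun i => vsub (a i) (b i)) <= snorm n p a + snorm n p b.
Proof.
  replace (fun i => vsub (a i) (b i)) with (fun i => vadd (a i) (vscal (-1) (b i))).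
  - eapply Rle_trans; [apply snorm_triangle|].
    assert (snorm n p (fun i => vscal (-1) (b i)) = snorm n p b); [|lra].
    unfold snorm. f_equal. apply rsum_ext. intros. apply rsum_ext. intros. unfold vscal. ring.
  - apply functional_extensionality. intros i. apply functional_extensionality. intros l.
    unfold vsub, vadd, vscal. ring.
Qed.

Lemma snorm_le_sub_add n p a b : snorm n p a <= snorm n p (fun i => vsub (a i) (b i)) + snorm n p b.
Proof.
  replace a with (fun i => vadd (vsub (a i) (b i)) (b i)) at 1; [apply snorm_triangle|].
  apply functional_extensionality. intros i. apply functional_extensionality. intros l.
  unfold vsub, vadd. ring.
Qed.

Lemma colsum_Zpow n W k y l : doubly_stochastic n W ->
  rsum n (fun i => Zpow n W k y i l) = rsum n (fun j => y j l).
Proof.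
  intros HW. induction k; simpl; [reflexivity|].
  rewrite <- IHk. apply (mxv_colsum n W (fun j => Zpow n W k y j l) HW).
Qed.

Lemma avg_Zpow n W k y l : doubly_stochastic n W -> avg n (Zpow n W k y) l = avg n y l.
Proof. intros HW. unfold avg. rewrite colsum_Zpow by exact HW. reflexivity. Qed.

Lemma ssq_Zpow_le n p W k y : doubly_stochastic n W -> ssq n p (Zpow n W k y) <= ssq n p y.
Proof.
  intros HW. induction k; simpl; [lra|].
  eapply Rle_trans; [|exact IHk]. rewrite !ssq_by_columns. apply rsum_le. intros l Hl.
  apply (dot_mxv_le n W (fun j => Zpow n W k y j l) HW).
Qed.

Lemma ssq_Zpow_le_slem n p W beta k y : (0 < n)%nat -> symmetric_mx n W ->
  doubly_stochastic n W -> simple_eig_one n W -> is_slem n W beta ->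
  (forall l, (l < p)%nat -> rsum n (fun j => y j l) = 0) ->
  ssq n p (Zpow n W k y) <= (beta * beta) ^ k * ssq n p y.
Proof.
  intros Hn Hs HW Hsi Hsl Hc. induction k; simpl; [lra|].
  apply Rle_trans with (beta * beta * ssq n p (Zpow n W k y)).
  - rewrite !ssq_by_columns, <- rsum_scal. apply rsum_le. intros l Hl.
    apply (dot_mxv_le_slem n W beta Hn Hs HW Hsi Hsl (fun j => Zpow n W k y j l)).
    rewrite colsum_Zpow by exact HW. apply Hc; exact Hl.
  - replace (beta * beta * (beta * beta) ^ k * ssq n p y)
      with (beta * beta * ((beta * beta) ^ k * ssq n p y)) by ring.
    apply Rmult_le_compat_l; [nra| exact IHk].
Qed.

Lemma Zpow_sub_const n W k y c i l : doubly_stochastic n W -> (i < n)%nat ->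
  Zpow n W k (fun j l => y j l - c l) i l = Zpow n W k y i l - c l.
Proof.
  intros [_ [Hr _]]. revert i l. induction k; intros i l Hi; simpl; [reflexivity|].
  unfold Zmul. rewrite (rsum_ext n _ (fun j => W i j * Zpow n W k y j l - c l * W i j))
    by (intros; rewrite IHk by assumption; ring).
  rewrite rsum_minus, rsum_scal, Hr by exact Hi. ring.
Qed.

Lemma ssq_sub_avg_le n p y : (0 < n)%nat ->
  ssq n p (fun i l => y i l - avg n y l) <= ssq n p y.
Proof.
  intros Hn. assert (HnR : 0 < INR n) by (apply lt_0_INR; lia).
  rewrite !ssq_by_columns. apply rsum_le. intros l Hl.
  set (m := avg n y l).
  assert (Hm : rsum n (fun i => y i l) = INR n * m) by (unfold m, avg; field; lra).
  unfold dot. rewrite (rsum_ext n _ (fun i => y i l * y i l - 2 * m * y i l + m * m)) by (intros; ring).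
  rewrite rsum_plus, rsum_minus, rsum_scal, rsum_const, Hm.
  assert (0 <= INR n * (m * m)) by (apply Rmult_le_pos; [lra|apply Rle_0_sqr]).
  lra.
Qed.

Lemma snorm_Zpow_sub_avg_le n p W beta y k : (0 < n)%nat -> symmetric_mx n W ->
  doubly_stochastic n W -> simple_eig_one n W -> is_slem n W beta -> 0 <= beta ->
  snorm n p (fun i => vsub (Zpow n W k y i) (avg n (Zpow n W k y))) <= beta ^ k * snorm n p y.
Proof.
  intros Hn Hs HW Hsi Hsl Hb.
  set (c := avg n y).
  assert (HnR : 0 < INR n) by (apply lt_0_INR; lia).
  assert (E : ssq n p (fun i => vsub (Zpow n W k y i) (avg n (Zpow n W k y)))
            = ssq n p (Zpow n W k (fun j l => y j l - c l))).
  { apply ssq_ext. intros i l Hi Hl. unfold vsub. rewrite avg_Zpow by exact HW.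
    rewrite Zpow_sub_const by assumption. reflexivity. }
  assert (H1 : ssq n p (Zpow n W k (fun j l => y j l - c l))
               <= (beta * beta) ^ k * ssq n p (fun j l => y j l - c l)).
  { apply ssq_Zpow_le_slem; auto. intros l Hl. rewrite rsum_minus, rsum_const. unfold c, avg. field. lra. }
  assert (H2 := ssq_sub_avg_le n p y Hn).
  assert (Hbk : 0 <= (beta * beta) ^ k) by (apply pow_le; nra).
  unfold snorm. fold (ssq n p (fun i => vsub (Zpow n W k y i) (avg n (Zpow n W k y)))) (ssq n p y).
  rewrite E, <- (sqrt_pow2 (beta ^ k)) by (apply pow_le; exact Hb).
  rewrite <- sqrt_mult by (try apply ssq_nonneg; apply pow2_ge_0).
  apply sqrt_le_1_alt. replace ((beta ^ k) ^ 2) with ((beta * beta) ^ k) by (rewrite Rpow_mult_distr; ring).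
  eapply Rle_trans; [exact H1|]. apply Rmult_le_compat_l; assumption.
Qed.

Lemma max_upto_ge n f i : (i < n)%nat -> f i <= max_upto n f.
Proof.
  induction n as [|n IH]; intros Hi; [lia|].
  destruct n as [|n].
  - replace i with 0%nat by lia. simpl. lra.
  - change (max_upto (S (S n)) f) with (Rmax (max_upto (S n) f) (f (S n))).
    destruct (Nat.eq_dec i (S n)) as [->|Hne]; [apply Rmax_r|].
    eapply Rle_trans; [apply IH; lia| apply Rmax_l].
Qed.

Lemma min_upto_le n f i : (i < n)%nat -> min_upto n f <= f i.
Proof.
  induction n as [|n IH]; intros Hi; [lia|].
  destruct n as [|n].
  - replace i with 0%nat by lia. simpl. lra.
  - change (min_upto (S (S n)) f) with (Rmin (min_upto (S n) f) (f (S n))).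
    destruct (Nat.eq_dec i (S n)) as [->|Hne]; [apply Rmin_r|].
    eapply Rle_trans; [apply Rmin_l| apply IH; lia].
Qed.

Lemma min_upto_pos n f : (0 < n)%nat -> (forall i, (i < n)%nat -> 0 < f i) -> 0 < min_upto n f.
Proof.
  induction n as [|n IH]; intros Hn H; [lia|].
  destruct n as [|n].
  - apply H. lia.
  - change (min_upto (S (S n)) f) with (Rmin (min_upto (S n) f) (f (S n))).
    apply Rmin_glb_lt; [apply IH; [lia| intros; apply H; lia]| apply H; lia].
Qed.

Definition fbar n (f : nat -> vec -> R) (x : vec) : R := / INR n * rsum n (fun i => f i x).
Definition gbar n (g : nat -> vec -> vec) (x : vec) : vec := fun l => / INR n * rsum n (fun i => g i x l).

Lemma fbar_strongly_convex n p f g mu : (0 < n)%nat ->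
  (forall i, (i < n)%nat -> strongly_convex p (mu i) (f i) (g i)) ->
  strongly_convex p (/ INR n * rsum n mu) (fbar n f) (gbar n g).
Proof.
  intros Hn Hsc x y. unfold fbar.
  assert (HnR : 0 < INR n) by (apply lt_0_INR; lia).
  set (V := vnorm p (vsub y x) ^ 2).
  assert (H : rsum n (fun i => f i x + dot p (g i x) (vsub y x) + mu i / 2 * V) <= rsum n (fun i => f i y)).
  { apply rsum_le. intros i Hi. assert (HH := Hsc i Hi x y). fold V in HH. lra. }
  rewrite !rsum_plus in H.
  assert (E1 : rsum n (fun i => mu i / 2 * V) = V / 2 * rsum n mu).
  { rewrite <- rsum_scal. apply rsum_ext. intros. field. }
  assert (E2 : dot p (gbar n g x) (vsub y x) = / INR n * rsum n (fun i => dot p (g i x) (vsub y x))).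
  { unfold dot, gbar. rewrite rsum_swap, <- rsum_scal. apply rsum_ext. intros l _.
    rewrite (Rmult_comm (/ INR n * _)), <- !rsum_scal. apply rsum_ext. intros. ring. }
  rewrite E1 in H. rewrite E2.
  apply (Rmult_le_compat_l (/ INR n)) in H; [|left; apply Rinv_0_lt_compat; lra].
  apply Rle_ge. eapply Rle_trans; [|exact H]. right. field. lra.
Qed.

Lemma gbar_lipschitz n p g Lf : (0 < n)%nat ->
  (forall i, (i < n)%nat -> lipschitz_grad p (Lf i) (g i)) ->
  lipschitz_grad p (/ INR n * rsum n Lf) (gbar n g).
Proof.
  intros Hn Hl x y.
  assert (HnR : 0 < / INR n) by (apply Rinv_0_lt_compat, lt_0_INR; lia).
  rewrite (vnorm_ext p _ (vscal (/ INR n) (fun l => rsum n (fun i => vsub (g i x) (g i y) l)))).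
  - rewrite vnorm_scal, Rabs_right, Rmult_assoc by lra.
    apply Rmult_le_compat_l; [lra|].
    eapply Rle_trans; [apply vnorm_rsum|].
    rewrite Rmult_comm, <- rsum_scal. apply rsum_le. intros i Hi.
    rewrite Rmult_comm. apply Hl. exact Hi.
  - intros l Hl'. unfold vsub, vscal, gbar. rewrite rsum_minus. ring.
Qed.

Lemma sqrt_1_minus_le v : 0 <= v <= 1 -> sqrt (1 - v) <= 1 - v / 2.
Proof.
  intros Hv. rewrite <- (sqrt_square (1 - v / 2)) by lra.
  apply sqrt_le_1_alt. nra.
Qed.

(* With e_k = |y_k - u|, mixing is nonexpansive, so
   e_(k+1) <= (1 - nu/2) (e_k + 2 |u|). *)
Lemma near_dgd_y_bounded n p W g alpha s0 ustar nu :
  doubly_stochastic n W -> 0 < nu <= 1 ->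
  (forall i x, (i < n)%nat ->
     dot p (vsub (vsub x (vscal alpha (g i x))) (ustar i)) (vsub (vsub x (vscal alpha (g i x))) (ustar i))
     <= (1 - nu) * dot p (vsub x (ustar i)) (vsub x (ustar i))) ->
  forall k, snorm n p (near_dgd_y n W g alpha s0 k)
     <= snorm n p (fun i => vsub s0 (ustar i)) + (nu + 4) / nu * snorm n p ustar.
Proof.
  intros HW Hnu Hloc.
  set (U := snorm n p ustar). set (e0 := snorm n p (fun i => vsub s0 (ustar i))).
  set (e := fun k => snorm n p (fun i => vsub (near_dgd_y n W g alpha s0 k i) (ustar i))).
  assert (HU : 0 <= U) by apply snorm_nonneg.
  assert (He0 : 0 <= e0) by apply snorm_nonneg.
  assert (Hyk : forall k, snorm n p (near_dgd_y n W g alpha s0 k) <= e k + U)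
    by (intros k; apply snorm_le_sub_add).
  assert (Hrec : forall k, e (S k) <= (1 - nu / 2) * (e k + 2 * U)).
  { intros k. set (x := near_dgd_x n W g alpha s0 k).
    assert (H1 : ssq n p (fun i => vsub (vsub (x i) (vscal alpha (g i (x i)))) (ustar i))
                 <= (1 - nu) * ssq n p (fun i => vsub (x i) (ustar i))).
    { unfold ssq. rewrite <- rsum_scal. apply rsum_le. intros i Hi. apply Hloc. exact Hi. }
    assert (H2 : e (S k) <= sqrt (1 - nu) * snorm n p (fun i => vsub (x i) (ustar i))).
    { unfold snorm. rewrite <- sqrt_mult by (try apply ssq_nonneg; lra).
      apply sqrt_le_1_alt. exact H1. }
    assert (H3 : snorm n p (fun i => vsub (x i) (ustar i)) <= snorm n p x + U) by apply snorm_sub_le.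
    assert (H4 : snorm n p x <= snorm n p (near_dgd_y n W g alpha s0 k))
      by (apply sqrt_le_1_alt, ssq_Zpow_le, HW).
    assert (H5 := Hyk k).
    assert (Hq := sqrt_1_minus_le nu ltac:(lra)). assert (Hq0 := sqrt_pos (1 - nu)).
    assert (Hs0 := snorm_nonneg n p (fun i => vsub (x i) (ustar i))).
    eapply Rle_trans; [exact H2|]. apply Rmult_le_compat; lra. }
  assert (Hb : forall k, e k <= e0 + 4 * U / nu).
  { assert (0 <= 4 * U / nu) by (apply Rmult_le_pos; [lra| left; apply Rinv_0_lt_compat; lra]).
    induction k; [unfold e, e0; simpl; lra|].
    eapply Rle_trans; [apply Hrec|].
    assert (Hek : 0 <= e k) by apply snorm_nonneg.
    apply Rle_trans with ((1 - nu / 2) * (e0 + 4 * U / nu + 2 * U)); [apply Rmult_le_compat_l; lra|].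
    assert ((1 - nu / 2) * (e0 + 4 * U / nu + 2 * U) = e0 + 4 * U / nu - nu / 2 * e0 - nu * U)
      by (field; lra).
    assert (0 <= nu / 2 * e0) by (apply Rmult_le_pos; lra).
    assert (0 <= nu * U) by (apply Rmult_le_pos; lra). lra. }
  intros k. eapply Rle_trans; [apply Hyk|].
  assert ((nu + 4) / nu * U = U + 4 * U / nu) by (field; lra).
  assert (Hk := Hb k). fold e0 U. lra.
Qed.

Lemma sqr_add_le_young A B d : 0 < d ->
  (A + B) * (A + B) <= (1 + d) * (A * A) + (1 + / d) * (B * B).
Proof.
  intros Hd.
  enough (2 * A * B <= d * (A * A) + / d * (B * B)) by lra.
  apply (Rmult_le_reg_l d); [exact Hd|].
  replace (d * (d * (A * A) + / d * (B * B))) with (d * A * (d * A) + B * B) by (field; lra).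
  assert (0 <= (d * A - B) * (d * A - B)) by apply Rle_0_sqr. lra.
Qed.

(* The perturbation is absorbed by half of the contraction margin a/2,
   since 4 c3^2 <= a C^2. *)
Lemma perturbed_contraction_rate (E : nat -> R) (C rho beta a c3 : R) :
  (forall k, 0 <= E k) -> E 0%nat <= C -> 0 <= C -> 0 < a < 1 ->
  0 <= beta <= rho -> 1 - a / 4 <= rho * rho -> 4 * (c3 * c3) <= a * (C * C) ->
  (forall k, E (S k) * E (S k) <= (1 - a / 2) * (E k * E k) + c3 * c3 * (beta ^ k * beta ^ k)) ->
  forall k, E k <= C * rho ^ k.
Proof.
  intros HE0 H0 HC Ha Hb Hrho HCc Hrec.
  induction k; [simpl; lra|].
  set (P := rho ^ k) in *. set (Bk := beta ^ k).
  assert (HP : 0 <= P) by (apply pow_le; lra).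
  assert (HBk : 0 <= Bk) by (apply pow_le; lra).
  assert (HBP : Bk <= P) by (apply pow_incr; lra).
  assert (HEk := HE0 k). assert (HEk1 := HE0 (S k)).
  assert (H1 : E k * E k <= (C * P) * (C * P)) by (apply Rmult_le_compat; lra).
  assert (H2 : Bk * Bk <= P * P) by (apply Rmult_le_compat; lra).
  assert (H3 : (1 - a / 2) * (E k * E k) <= (1 - a / 2) * ((C * P) * (C * P)))
    by (apply Rmult_le_compat_l; lra).
  assert (H4 : c3 * c3 * (Bk * Bk) <= c3 * c3 * (P * P))
    by (apply Rmult_le_compat_l; [apply Rle_0_sqr| exact H2]).
  assert (H5 : 4 * (c3 * c3) * (P * P) <= a * (C * C) * (P * P))
    by (apply Rmult_le_compat_r; [apply Rle_0_sqr| exact HCc]).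
  assert (H6 : (1 - a / 4) * (C * P * (C * P)) <= rho * rho * (C * P * (C * P)))
    by (apply Rmult_le_compat_r; [apply Rle_0_sqr| exact Hrho]).
  assert (H7 : E (S k) * E (S k) <= (C * (rho * P)) * (C * (rho * P))).
  { assert (Hr := Hrec k). fold P Bk in Hr.
    replace ((C * (rho * P)) * (C * (rho * P))) with (rho * rho * (C * P * (C * P))) by ring.
    assert ((1 - a / 2) * (C * P * (C * P)) =
            (1 - a / 4) * (C * P * (C * P)) - a / 4 * (C * C) * (P * P)) by field.
    lra. }
  assert (HCP : 0 <= C * (rho * P)) by (apply Rmult_le_pos; [lra| apply Rmult_le_pos; lra]).
  change (E (S k) <= C * (rho * P)). apply Rsqr_incr_0_var; [unfold Rsqr; exact H7| exact HCP].
Qed.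

Section NearDGD.

Variables (n p : nat) (W : nat -> nat -> R) (beta : R).
Variables (f : nat -> vec -> R) (g : nat -> vec -> vec) (mu Lf : nat -> R).
Variables (xstar : vec) (ustar : svec) (s0 : vec) (alpha : R).

Hypothesis Hn : (0 < n)%nat.
Hypothesis Hp : (0 < p)%nat.
Hypothesis Hsym : symmetric_mx n W.
Hypothesis HW : doubly_stochastic n W.
Hypothesis Hsimple : simple_eig_one n W.
Hypothesis Hslem : is_slem n W beta.
Hypothesis Hbeta : 0 < beta < 1.
Hypothesis Hmu : forall i, (i < n)%nat -> 0 < mu i.
Hypothesis Hsc : forall i, (i < n)%nat -> strongly_convex p (mu i) (f i) (g i).
Hypothesis Hlip : forall i, (i < n)%nat -> lipschitz_grad p (Lf i) (g i).
Hypothesis Hustar : forall i, (i < n)%nat -> is_minimizer (f i) (ustar i).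
Hypothesis Hxstar : is_minimizer (fun x => rsum n (fun i => f i x)) xstar.

Let L := max_upto n Lf.
Let mubar := / INR n * rsum n mu.
Let Lbar := / INR n * rsum n Lf.
Let c2 := 2 * mubar * Lbar / (mubar + Lbar).
Let c4 := 2 / (mubar + Lbar).

Hypothesis Halpha : 0 < alpha.
Hypothesis Halpha_le : alpha <= Rmin (/ L) c4.
Hypothesis Halpha_c2 : alpha * c2 < 1.

Let nu := 2 * alpha * min_upto n (fun i => mu i * Lf i / (mu i + Lf i)).
Let D := snorm n p (fun i => vsub s0 (ustar i)) + (nu + 4) / nu * snorm n p ustar.
Let x k := near_dgd_x n W g alpha s0 k.
Let xbar k := avg n (x k).
Let E k := vnorm p (vsub (xbar k) xstar).

Lemma mu_le_Lf i : (i < n)%nat -> mu i <= Lf i.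
Proof. intros Hi. exact (strong_convexity_le_lipschitz p _ _ _ _ (Hsc i Hi) (Hlip i Hi) Hp). Qed.

Lemma Lf_le_L i : (i < n)%nat -> Lf i <= L.
Proof. apply max_upto_ge. Qed.

Lemma L_pos : 0 < L.
Proof. assert (H1 := mu_le_Lf 0 Hn). assert (H2 := Hmu 0%nat Hn). assert (H3 := Lf_le_L 0 Hn). lra. Qed.

Lemma alpha_L_le_1 : alpha * L <= 1.
Proof.
  assert (HL := L_pos).
  assert (HaL : alpha <= / L) by (eapply Rle_trans; [exact Halpha_le| apply Rmin_l]).
  apply (Rmult_le_compat_r L) in HaL; [|lra]. rewrite Rinv_l in HaL by lra. exact HaL.
Qed.

Lemma mubar_bounds : 0 < mubar <= Lbar.
Proof.
  assert (HnR : 0 < / INR n) by (apply Rinv_0_lt_compat, lt_0_INR; lia).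
  split.
  - apply Rmult_lt_0_compat; [exact HnR|].
    eapply Rlt_le_trans; [apply (Hmu 0%nat Hn)|].
    apply (rsum_ge_term n mu 0%nat); [intros; left; apply Hmu; assumption| exact Hn].
  - apply Rmult_le_compat_l; [lra|]. apply rsum_le. exact mu_le_Lf.
Qed.

Lemma alpha_c2_pos : 0 < alpha * c2.
Proof.
  assert (H := mubar_bounds). apply Rmult_lt_0_compat; [exact Halpha|].
  apply Rdiv_lt_0_compat; [apply Rmult_lt_0_compat|]; lra.
Qed.

Lemma nu_bounds : 0 < nu <= 1.
Proof.
  set (h := fun i => mu i * Lf i / (mu i + Lf i)).
  assert (Hh : forall i, (i < n)%nat -> 0 < h i /\ h i <= Lf i / 2).
  { intros i Hi. assert (H1 := Hmu i Hi). assert (H2 := mu_le_Lf i Hi). unfold h. split.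
    - apply Rdiv_lt_0_compat; nra.
    - apply (Rmult_le_reg_r (mu i + Lf i)); [lra|].
      replace (mu i * Lf i / (mu i + Lf i) * (mu i + Lf i)) with (mu i * Lf i) by (field; lra).
      nra. }
  assert (Hmin0 := min_upto_pos n h Hn (fun i Hi => proj1 (Hh i Hi))).
  assert (Hmin1 := min_upto_le n h 0 Hn).
  assert (H0 := Hh 0%nat Hn). assert (H1 := Lf_le_L 0 Hn). assert (H2 := alpha_L_le_1).
  unfold nu. fold h. split; [apply Rmult_lt_0_compat; lra|].
  assert (alpha * min_upto n h <= alpha * (L / 2)) by (apply Rmult_le_compat_l; lra).
  lra.
Qed.

Lemma local_step_contraction i y : (i < n)%nat ->
  dot p (vsub (vsub y (vscal alpha (g i y))) (ustar i)) (vsub (vsub y (vscal alpha (g i y))) (ustar i))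
  <= (1 - nu) * dot p (vsub y (ustar i)) (vsub y (ustar i)).
Proof.
  intros Hi.
  assert (H1 := Hmu i Hi). assert (H2 := mu_le_Lf i Hi). assert (H3 := Lf_le_L i Hi).
  assert (HaL := alpha_L_le_1). assert (HL := L_pos).
  assert (Ha2 : alpha <= 2 / (mu i + Lf i)).
  { apply (Rmult_le_reg_r (mu i + Lf i)); [lra|].
    replace (2 / (mu i + Lf i) * (mu i + Lf i)) with 2 by (field; lra).
    assert (alpha * Lf i <= alpha * L) by (apply Rmult_le_compat_l; lra).
    assert (alpha * mu i <= alpha * Lf i) by (apply Rmult_le_compat_l; lra). lra. }
  assert (Hgu : forall l, (l < p)%nat -> g i (ustar i) l = 0).
  { apply (grad_eq0_of_minimizer p (f i) (g i) (mu i) (Lf i)); auto; lra. }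
  assert (Hc := gradient_step_contraction p (f i) (g i) (mu i) (Lf i) (Hsc i Hi) (Hlip i Hi)
                  ltac:(lra) H2 alpha ltac:(lra) ltac:(lra) Ha2 y (ustar i)).
  erewrite dot_ext; [eapply Rle_trans; [exact Hc|] | |];
    [| intros l Hl; unfold vsub, vscal; rewrite Hgu by exact Hl; ring ..].
  apply Rmult_le_compat_r; [apply dot_self_nonneg|].
  assert (Hmin := min_upto_le n (fun i => mu i * Lf i / (mu i + Lf i)) i Hi). cbv beta in Hmin.
  replace (2 * alpha * mu i * Lf i / (mu i + Lf i)) with (2 * alpha * (mu i * Lf i / (mu i + Lf i)))
    by (field; lra).
  unfold nu. assert (Hnu := Rmult_le_compat_l (2 * alpha) _ _ ltac:(lra) Hmin). lra.
Qed.

Lemma iterates_bounded k : snorm n p (near_dgd_y n W g alpha s0 k) <= D.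
Proof. apply near_dgd_y_bounded; [exact HW| exact nu_bounds| exact local_step_contraction]. Qed.

Lemma disagreement_bound k : snorm n p (fun i => vsub (x k i) (xbar k)) <= beta ^ k * D.
Proof.
  unfold xbar, x, near_dgd_x.
  eapply Rle_trans; [apply (snorm_Zpow_sub_avg_le n p W beta); auto; lra|].
  apply Rmult_le_compat_l; [apply pow_le; lra| apply iterates_bounded].
Qed.

Lemma gbar_xstar_eq0 l : (l < p)%nat -> gbar n g xstar l = 0.
Proof.
  assert (Hm := mubar_bounds).
  apply (grad_eq0_of_minimizer p (fbar n f) (gbar n g) mubar Lbar
           (fbar_strongly_convex n p f g mu Hn Hsc) (gbar_lipschitz n p g Lf Hn Hlip)); [lra|].
  intros y. apply Rmult_le_compat_l; [left; apply Rinv_0_lt_compat, lt_0_INR; lia| apply Hxstar].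
Qed.

Lemma avg_gradient_step_error (xs : svec) :
  vnorm p (vsub (avg n (fun i => vsub (xs i) (vscal alpha (g i (xs i))))) xstar)
  <= sqrt (1 - alpha * c2) * vnorm p (vsub (avg n xs) xstar)
     + alpha * L * snorm n p (fun i => vsub (xs i) (avg n xs)).
Proof.
  assert (HnR : 0 < INR n) by (apply lt_0_INR; lia).
  assert (Hm := mubar_bounds). assert (HL := alpha_L_le_1). assert (HL0 := L_pos).
  set (xb := avg n xs).
  set (a := vsub (vsub xb (vscal alpha (gbar n g xb))) (vsub xstar (vscal alpha (gbar n g xstar)))).
  set (b := vscal alpha (vsub (gbar n g xb) (fun l => / INR n * rsum n (fun i => g i (xs i) l)))).
  rewrite (vnorm_ext p _ (vadd a b)).
  2:{ intros l Hl. unfold a, b, vadd, vsub, vscal, avg.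
      rewrite (gbar_xstar_eq0 l Hl). unfold xb, avg, gbar.
      rewrite rsum_minus, (rsum_scal n alpha). field. lra. }
  eapply Rle_trans; [apply vnorm_triangle|]. apply Rplus_le_compat.
  - assert (Ha4 : alpha <= 2 / (mubar + Lbar)) by (eapply Rle_trans; [exact Halpha_le| apply Rmin_r]).
    assert (H := gradient_step_contraction p (fbar n f) (gbar n g) mubar Lbar
                   (fbar_strongly_convex n p f g mu Hn Hsc) (gbar_lipschitz n p g Lf Hn Hlip)
                   ltac:(lra) ltac:(lra) alpha ltac:(lra) ltac:(lra) Ha4 xb xstar).
    fold a in H. unfold vnorm. rewrite <- sqrt_mult by (try apply dot_self_nonneg; lra).
    apply sqrt_le_1_alt. unfold c2. replace (alpha * (2 * mubar * Lbar / (mubar + Lbar)))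
      with (2 * alpha * mubar * Lbar / (mubar + Lbar)) by (field; lra). exact H.
  - unfold b. rewrite vnorm_scal, Rabs_right, Rmult_assoc by lra.
    apply Rmult_le_compat_l; [lra|].
    set (S := snorm n p (fun i => vsub (xs i) xb)).
    rewrite (vnorm_ext p _ (vscal (/ INR n) (fun l => rsum n (fun i => vsub (g i xb) (g i (xs i)) l)))).
    2:{ intros l Hl. unfold vsub, vscal, gbar. rewrite rsum_minus. ring. }
    rewrite vnorm_scal, Rabs_right by (left; apply Rinv_0_lt_compat; lra).
    apply Rle_trans with (/ INR n * rsum n (fun _ => L * S)).
    + apply Rmult_le_compat_l; [left; apply Rinv_0_lt_compat; lra|].
      eapply Rle_trans; [apply vnorm_rsum|]. apply rsum_le. intros i Hi.
      eapply Rle_trans; [apply Hlip; exact Hi|].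
      assert (Hv : vnorm p (vsub xb (xs i)) <= S).
      { rewrite vnorm_sub_comm. apply (vnorm_le_snorm n p (fun i => vsub (xs i) xb)). exact Hi. }
      assert (0 <= vnorm p (vsub xb (xs i))) by apply vnorm_nonneg.
      assert (HLi := Lf_le_L i Hi). assert (H0 := Hmu i Hi). assert (H1 := mu_le_Lf i Hi).
      apply Rmult_le_compat; lra.
    + rewrite rsum_const. right. field. lra.
Qed.

Lemma avg_error_step k : E (S k) <= sqrt (1 - alpha * c2) * E k + alpha * L * (beta ^ k * D).
Proof.
  assert (HL := alpha_L_le_1). assert (HL0 := L_pos).
  unfold E at 1. replace (xbar (S k)) with (avg n (fun i => vsub (x k i) (vscal alpha (g i (x k i))))).
  - eapply Rle_trans; [apply avg_gradient_step_error|].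
    apply Rplus_le_compat_l, Rmult_le_compat_l; [nra| apply disagreement_bound].
  - apply functional_extensionality. intros l. unfold xbar, x, near_dgd_x.
    rewrite avg_Zpow by exact HW. reflexivity.
Qed.

Lemma D_nonneg : 0 <= D.
Proof. eapply Rle_trans; [apply snorm_nonneg| apply (iterates_bounded 0)]. Qed.

Let delta := c2 / (2 * (1 - alpha * c2)).
Let c3 := sqrt (alpha * (alpha + / delta)) * D * L.

(* Squaring with Young's inequality, weight alpha delta, turns the factor
   sqrt (1 - alpha c2) into 1 - alpha c2 / 2 and alpha L D into c3. *)
Lemma avg_error_sqr_step k :
  E (S k) * E (S k) <= (1 - alpha * c2 / 2) * (E k * E k) + c3 * c3 * (beta ^ k * beta ^ k).
Proof.
  assert (Hac2 := alpha_c2_pos). assert (HL0 := L_pos).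
  assert (HD := D_nonneg).
  assert (Hdelta : 0 < alpha * delta).
  { unfold delta. apply Rmult_lt_0_compat; [lra|].
    apply Rdiv_lt_0_compat; [|lra]. apply (Rmult_lt_reg_l alpha); lra. }
  set (A := sqrt (1 - alpha * c2) * E k).
  set (B := alpha * L * (beta ^ k * D)).
  assert (HA : 0 <= A) by (apply Rmult_le_pos; [apply sqrt_pos| apply vnorm_nonneg]).
  assert (HB : 0 <= B).
  { apply Rmult_le_pos; [apply Rmult_le_pos; lra| apply Rmult_le_pos; [apply pow_le; lra| exact HD]]. }
  assert (H1 : E (S k) * E (S k) <= (A + B) * (A + B)).
  { assert (H := avg_error_step k). fold A B in H. assert (0 <= E (S k)) by apply vnorm_nonneg.
    apply Rmult_le_compat; lra. }
  assert (H2 := sqr_add_le_young A B (alpha * delta) Hdelta).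
  assert (HAA : A * A = (1 - alpha * c2) * (E k * E k)).
  { unfold A. replace (sqrt (1 - alpha * c2) * E k * (sqrt (1 - alpha * c2) * E k))
      with ((sqrt (1 - alpha * c2) * sqrt (1 - alpha * c2)) * (E k * E k)) by ring.
    rewrite sqrt_sqrt by lra. reflexivity. }
  assert (Hc3 : c3 * c3 = alpha * (alpha + / delta) * (D * D) * (L * L)).
  { unfold c3. set (r := alpha * (alpha + / delta)).
    assert (0 < / delta) by (apply Rinv_0_lt_compat; apply (Rmult_lt_reg_l alpha); lra).
    replace (sqrt r * D * L * (sqrt r * D * L)) with (sqrt r * sqrt r * (D * D) * (L * L)) by ring.
    rewrite sqrt_sqrt; [reflexivity| unfold r; nra]. }
  assert (Hk1 : (1 + alpha * delta) * (1 - alpha * c2) = 1 - alpha * c2 / 2)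
    by (unfold delta; field; lra).
  assert (Hk2 : (1 + / (alpha * delta)) * (B * B) = c3 * c3 * (beta ^ k * beta ^ k)).
  { rewrite Hc3. unfold B. field. split; [|lra]. intros H0. rewrite H0 in Hdelta. lra. }
  rewrite HAA, Hk2, <- Rmult_assoc, Hk1 in H2. lra.
Qed.

Let C := Rmax (E 0) (2 * c3 / sqrt (alpha * c2)).
Let rho := Rmax beta (sqrt (1 - alpha * c2 / 4)).

Lemma avg_error_rate k : E k <= C * rho ^ k.
Proof.
  assert (Hac2 := alpha_c2_pos).
  assert (HC0 : 0 <= C) by (eapply Rle_trans; [apply vnorm_nonneg| apply Rmax_l]).
  apply (perturbed_contraction_rate E C rho beta (alpha * c2) c3);
    [intros; apply vnorm_nonneg| apply Rmax_l| exact HC0| lra| | | | exact avg_error_sqr_step].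
  - split; [lra| apply Rmax_l].
  - assert (Hs : sqrt (1 - alpha * c2 / 4) <= rho) by apply Rmax_r.
    assert (H0 := sqrt_pos (1 - alpha * c2 / 4)).
    rewrite <- (sqrt_sqrt (1 - alpha * c2 / 4)) by lra.
    apply Rmult_le_compat; lra.
  - assert (Hs : 2 * c3 / sqrt (alpha * c2) <= C) by apply Rmax_r.
    assert (Hsq : 0 < sqrt (alpha * c2)) by (apply sqrt_lt_R0; lra).
    set (q := 2 * c3 / sqrt (alpha * c2)) in *.
    assert (Hq : alpha * c2 * (q * q) = 4 * (c3 * c3)).
    { unfold q. replace (alpha * c2) with (sqrt (alpha * c2) * sqrt (alpha * c2)) at 1
        by (apply sqrt_sqrt; lra). field. lra. }
    assert (0 <= c3).
    { unfold c3. assert (HL := L_pos).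
      apply Rmult_le_pos; [apply Rmult_le_pos; [apply sqrt_pos| apply D_nonneg]| lra]. }
    assert (0 <= q) by (apply Rmult_le_pos; [lra| left; apply Rinv_0_lt_compat; exact Hsq]).
    rewrite <- Hq. apply Rmult_le_compat_l; [lra|]. apply Rmult_le_compat; lra.
Qed.

End NearDGD.

Theorem theorem4
  (n p : nat) (W : nat -> nat -> R) (beta : R)
  (f : nat -> vec -> R) (g : nat -> vec -> vec) (mu Lf : nat -> R)
  (xstar : vec) (ustar : svec) (s0 : vec) (alpha : R) :
  symmetric_mx n W ->
  doubly_stochastic n W ->
  (forall i, (i < n)%nat -> 0 < W i i) ->
  connected_net n W ->
  simple_eig_one n W ->
  other_eigs_in_open_unit n W ->
  is_slem n W beta ->
  0 < beta < 1 ->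
  (forall i, (i < n)%nat -> is_gradient p (f i) (g i)) ->
  (forall i, (i < n)%nat -> 0 < mu i) ->
  (forall i, (i < n)%nat -> strongly_convex p (mu i) (f i) (g i)) ->
  (forall i, (i < n)%nat -> lipschitz_grad p (Lf i) (g i)) ->
  (forall i, (i < n)%nat -> is_minimizer (f i) (ustar i)) ->
  is_minimizer (fun x => rsum n (fun i => f i x)) xstar ->
  let L := max_upto n Lf in
  let mubar := / INR n * rsum n mu in
  let Lbar := / INR n * rsum n Lf in
  let c2 := 2 * mubar * Lbar / (mubar + Lbar) in
  let c4 := 2 / (mubar + Lbar) in
  0 < alpha -> alpha <= Rmin (/ L) c4 -> alpha * c2 < 1 ->
  let nu := 2 * alpha * min_upto n (fun i => mu i * Lf i / (mu i + Lf i)) in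
  let y0 : svec := fun _ => s0 in
  let D := snorm n p (fun i => vsub (y0 i) (ustar i))
           + (nu + 4) / nu * snorm n p ustar in
  let delta := c2 / (2 * (1 - alpha * c2)) in
  let c3 := sqrt (alpha * (alpha + / delta)) * D * L in
  let xbar := fun k => avg n (near_dgd_x n W g alpha s0 k) in
  let C := Rmax (vnorm p (vsub (xbar 0%nat) xstar)) (2 * c3 / sqrt (alpha * c2)) in
  let rho := Rmax beta (sqrt (1 - alpha * c2 / 4)) in
  forall k : nat, vnorm p (vsub (xbar k) xstar) <= C * rho ^ k.
Proof.
  intros Hsym HW _ _ Hsimple _ Hslem Hbeta _ Hmu Hsc Hlip Hustar Hxstar
         L mubar Lbar c2 c4 Halpha Halpha_le Halpha_c2 nu y0 D delta c3 xbar C rho k.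
  destruct (Nat.eq_dec p 0) as [->|Hp].
  - unfold vnorm, dot. simpl. rewrite sqrt_0.
    apply Rmult_le_pos; [|apply pow_le; apply Rle_trans with beta; [lra| apply Rmax_l]].
    eapply Rle_trans; [apply sqrt_pos| apply Rmax_l].
  - assert (Hn : (0 < n)%nat) by (destruct Hslem as [[_ [[v [[i [Hi _]] _]] _]] _]; lia).
    exact (avg_error_rate n p W beta f g mu Lf xstar ustar s0 alpha Hn ltac:(lia) Hsym HW
             Hsimple Hslem Hbeta Hmu Hsc Hlip Hustar Hxstar Halpha Halpha_le Halpha_c2 k).
Qed.
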